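(* Let $t\ge 1$ be an integer, let $\mathcal A$ be an alphabet, and let $\mathfrak D_t$ be the simple 2-level network $([2t,2t],[1,1])$, with an adversary able to corrupt up to $t$ of the edges outgoing from the source. Then, for every positive integer $i$, the $i$-shot capacity of $\mathfrak D_t$ (in Scenario A.1 as well as in Scenario A.2) is \[C_i(\mathfrak D_t,\mathcal A,\mathbf A_{\mathfrak D_t})=1.\]
   Context: An alphabet is a finite set $\mathcal A$ with $|\mathcal A|\ge 2$. For positive integers $a_j,b_j$, the simple 2-level network $([a_1,\dots,a_n],[b_1,\dots,b_n])$ is the directed acyclic multigraph with a source $S$, intermediate nodes $V_1,\dots,V_n$, a single terminal $T$, exactly $a_j$ parallel edges from $S$ to $V_j$ and exactly $b_j$ parallel edges from $V_j$ to $T$, and no other edges. Each edge carries one symbol of $\mathcal A$. A network code is a family $\mathcal F=\{\mathcal F_{V_j}:\mathcal A^{a_j}\to\mathcal A^{b_j}\}_j$. In one use, the source sends $x\in\mathcal A^{a_1+\dots+a_n}$ on its outgoing edges (the set $\mathcal U_S$), the adversary may replace the symbols on up to $t$ edges of $\mathcal U_S$ by arbitrary symbols, each $V_j$ applies $\mathcal F_{V_j}$ to the symbols it receives and sends the result to $T$. The fan-out set $\Omega_{\mathcal F}(x)$ is the set of all vectors $T$ can receive. For $i$ uses with the same network code, the input is $(x^1,\dots,x^i)$ and: in Scenario A.1 the adversary fixes one set $W\subseteq\mathcal U_S$ with $|W|\le t$ and in each of the $i$ rounds may alter (arbitrarily, independently per round) only symbols on edges of $W$; in Scenario A.2 the adversary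 may choose a different set of at most $t$ edges in each round, so the fan-out set is $\Omega_{\mathcal F}(x^1)\times\dots\times\Omega_{\mathcal F}(x^i)$. A nonempty code $C\subseteq(\mathcal A^{a_1+\dots+a_n})^i$ is unambiguous if distinct codewords have disjoint fan-out sets. The $i$-shot capacity $C_i$ is the maximum of $\log_{|\mathcal A|}(|C|)/i$ over all network codes and unambiguous codes $C$. *)

From Stdlib Require Import Reals.
From mathcomp Require Import all_boot.
Set Implicit Arguments.
Unset Strict Implicit.
Unset Printing Implicit Defensive.

Section SimpleTwoLevel.
Variables (A : finType) (n : nat) (a b : 'I_n -> nat).

Definition src_edge := {j : 'I_n & 'I_(a j)}.
Definition term_edge := {j : 'I_n & 'I_(b j)}.

Definition input := {ffun src_edge -> A}.
Definition output := {ffun term_edge -> A}.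

Definition netcode :=
  {dffun forall j : 'I_n, {ffun {ffun 'I_(a j) -> A} -> {ffun 'I_(b j) -> A}}}.

Definition net_out (F : netcode) (x : input) : output :=
  [ffun o : term_edge =>
     F (tag o) [ffun l : 'I_(a (tag o)) => x (Tagged (fun j => 'I_(a j)) l)]
       (tagged o)].

Definition agree_outside (W : {set src_edge}) (x x' : input) : bool :=
  [forall e, (e \notin W) ==> (x e == x' e)].

Inductive scenario := A1 | A2.

Variables (t i : nat).

Definition codeword := {ffun 'I_i -> input}.
Definition received := {ffun 'I_i -> output}.

(* Scenario A.1: one fixed set W (|W| <= t) for all i rounds. *)
Definition fanout_A1 (F : netcode) (x : codeword) : {set received} :=
  [set y : received | [exists W : {set src_edge}, (#|W| <= t) &&
     [exists x' : codeword,
        [forall r, agree_outside W (x r) (x' r) && (y r == net_out F (x' r))]]]].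

(* Scenario A.2: a possibly different set in each round
   (the product of the one-shot fan-out sets). *)
Definition fanout_A2 (F : netcode) (x : codeword) : {set received} :=
  [set y : received | [forall r, [exists W : {set src_edge}, (#|W| <= t) &&
     [exists x' : input, agree_outside W (x r) x' && (y r == net_out F x')]]]].

Definition fanout (s : scenario) :=
  match s with A1 => fanout_A1 | A2 => fanout_A2 end.

Definition unambiguous (s : scenario) (F : netcode) (C : {set codeword}) : bool :=
  (C != set0) &&
  [forall c1 in C, forall c2 in C,
     (c1 != c2) ==> [disjoint fanout s F c1 & fanout s F c2]].

Definition max_code_size (s : scenario) : nat :=
  \max_(F : netcode) \max_(C : {set codeword} | unambiguous s F C) #|C|.

Definition capacity (s : scenario) : R :=
  Rdiv (Rdiv (ln (INR (max_code_size s))) (ln (INR #|A|))) (INR i).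

End SimpleTwoLevel.

Definition Dt_a (t : nat) : 'I_2 -> nat := fun _ => (2 * t)%N.
Definition Dt_b : 'I_2 -> nat := fun _ => 1%N.

From Pilot Require Import Defs.
From Stdlib Require Import Reals Lra.
From mathcomp Require Import all_boot zify.

(* Upper bound: every node forwards one symbol per round, and two codewords on
   which the first node behaves alike in every round are confusable, because the
   adversary can overwrite either half (t edges) of the second node's input with
   the other codeword's.  Hence |C| <= |A|^i.
   Lower bound: send each message symbol on all 4t edges and let each node output
   the symbol of least rank seen at least t times.  The t corruptions are shared
   by the nodes, so one node sees fewer than t errors and outputs the sent symbol,
   while the other still sees it t times and outputs a symbol of no larger rank;
   the terminal decodes the symbol of larger rank. *)

Set Implicit Arguments.
Unset Strict Implicit.
Unset Printing Implicit Defensive.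

Section Network.
Variables (A : finType) (n : nat) (a b : 'I_n -> nat) (t i : nat).

Definition node_in (x : input A a) (j : 'I_n) : {ffun 'I_(a j) -> A} :=
  [ffun l => x (Tagged (fun j => 'I_(a j)) l)].

Lemma net_out_congr (F : netcode A a b) (x y : input A a) :
  (forall j, F j (node_in x j) = F j (node_in y j)) -> net_out F x = net_out F y.
Proof. by move=> Fxy; apply/ffunP => o; rewrite !ffunE -!/(node_in _ _) Fxy. Qed.

Lemma fanout_A1_sub_A2 (F : netcode A a b) (c : codeword A a i) :
  fanout_A1 t F c \subset fanout_A2 t F c.
Proof.
apply/subsetP => y; rewrite !inE => /existsP [W /andP [cardW /existsP [x' /forallP Hx']]].
apply/forallP => r; apply/existsP; exists W; rewrite cardW.
by apply/existsP; exists (x' r).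
Qed.

Lemma fanout_A1_sub s (F : netcode A a b) (c : codeword A a i) :
  fanout_A1 t F c \subset fanout t s F c.
Proof. by case: s; [exact: subxx | exact: fanout_A1_sub_A2]. Qed.

Lemma fanout_sub_A2 s (F : netcode A a b) (c : codeword A a i) :
  fanout t s F c \subset fanout_A2 t F c.
Proof. by case: s; [exact: fanout_A1_sub_A2 | exact: subxx]. Qed.

Lemma unambiguous_fanout_sub s s' (F : netcode A a b) (C : {set codeword A a i}) :
  (forall c : codeword A a i, fanout t s F c \subset fanout t s' F c) ->
  unambiguous t s' F C -> unambiguous t s F C.
Proof.
move=> sub /andP [C0 /forall_inP H]; apply/andP; split=> //.
apply/forall_inP => c1 C1; apply/forall_inP => c2 C2; apply/implyP => ne.
exact: disjointWl (sub c1) (disjointWr (sub c2) (implyP (forall_inP (H c1 C1) c2 C2) ne)).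
Qed.

(* Unqualified, [A1] would resolve to a constant of the Reals library. *)
Lemma unambiguous_A1 s (F : netcode A a b) (C : {set codeword A a i}) :
  unambiguous t s F C -> unambiguous t Defs.A1 F C.
Proof. exact/unambiguous_fanout_sub/fanout_A1_sub. Qed.

Lemma unambiguous_A2 s (F : netcode A a b) (C : {set codeword A a i}) :
  unambiguous t A2 F C -> unambiguous t s F C.
Proof. exact/unambiguous_fanout_sub/fanout_sub_A2. Qed.

Definition patch (W : {set src_edge a}) (x y : input A a) : input A a :=
  [ffun e => if e \in W then y e else x e].

Lemma agree_outside_patch W (x y : input A a) : agree_outside W x (patch W x y).
Proof. by apply/forallP => e; apply/implyP => /negbTE eW; rewrite ffunE eW. Qed.

Lemma mem_fanout_A1 (F : netcode A a b) (c x : codeword A a i)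
    (W : {set src_edge a}) :
  #|W| <= t -> (forall r, agree_outside W (c r) (x r)) ->
  [ffun r => net_out F (x r)] \in fanout_A1 t F c.
Proof.
move=> cardW cWx; rewrite inE; apply/existsP; exists W; rewrite cardW.
by apply/existsP; exists x; apply/forallP => r; rewrite cWx ffunE eqxx.
Qed.

Lemma fanout_A2P (F : netcode A a b) (c : codeword A a i) y r :
  y \in fanout_A2 t F c ->
  exists (W : {set src_edge a}) x,
    [/\ #|W| <= t, agree_outside W (c r) x & y r = net_out F x].
Proof.
rewrite inE => /forallP/(_ r)/existsP [W /andP [cardW /existsP [x /andP [cWx /eqP yx]]]].
by exists W, x.
Qed.

End Network.

Lemma card_ord_ltn (m k : nat) : k <= m -> #|[set l : 'I_m | l < k]| = k.
Proof.
move=> km; rewrite -sum1_card.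
under eq_bigl do rewrite inE.
by rewrite -(big_ord_widen_cond _ xpredT (fun=> 1)) // sum1_card card_ord.
Qed.

Section ThresholdMin.
Variables (I A : finType) (a0 : A) (t : nat).

Definition occ (u : {ffun I -> A}) (x : A) : nat := #|[set l | u l == x]|.

Definition least_rank (P : pred A) : A :=
  if [pick x | P x] is Some x then [arg min_(y < x | P y) enum_rank y] else a0.

Lemma least_rankP (P : pred A) x :
  P x -> P (least_rank P) /\ enum_rank (least_rank P) <= enum_rank x.
Proof.
move=> Px; rewrite /least_rank; case: pickP => [y Py | /(_ x)]; last by rewrite Px.
by case: arg_minnP => // z Pz min_z; split; last exact: min_z.
Qed.

Definition thr_min (u : {ffun I -> A}) : A := least_rank (fun x => t <= occ u x).

Lemma occ_disjoint u x y : x != y -> occ u x + occ u y <= #|I|.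
Proof.
move=> xy; rewrite /occ -cardsUI.
have -> : [set l | u l == x] :&: [set l | u l == y] = set0.
  apply/setP => l; rewrite !inE; apply/andP => -[/eqP ux /eqP uy].
  by move: xy; rewrite -ux uy eqxx.
by rewrite cards0 addn0 max_card.
Qed.

Lemma thr_minP u x :
  t <= occ u x -> t <= occ u (thr_min u) /\ enum_rank (thr_min u) <= enum_rank x.
Proof. exact: (@least_rankP (fun y => t <= occ u y)). Qed.

Lemma thr_min_major u x : #|I| <= 2 * t -> t < occ u x -> thr_min u = x.
Proof.
move=> cardI tx; have [t_min _] := thr_minP (ltnW tx).
apply/eqP; apply: contraLR cardI => /(occ_disjoint u); rewrite -ltnNge; lia.
Qed.

End ThresholdMin.

Definition rank_max (A : finType) (x y : A) : A :=
  if enum_rank x <= enum_rank y then y else x.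

Lemma rank_maxE (A : finType) (x y m : A) :
  (x = m /\ enum_rank y <= enum_rank m) \/ (y = m /\ enum_rank x <= enum_rank m) ->
  rank_max x y = m.
Proof.
rewrite /rank_max => -[[-> ym] | [-> ->] //]; case: leqP => // my.
by apply: enum_rank_inj; apply/val_inj/eqP; rewrite eqn_leq ym my.
Qed.

Section TwoNodeNetwork.
Variables (A : finType) (t i : nat).
Hypothesis t_gt0 : 0 < t.

Local Notation a := (Dt_a t).
Local Notation b := Dt_b.

Definition edge (j : 'I_2) (l : 'I_(2 * t)) : src_edge a :=
  @Tagged _ j (fun j => 'I_(a j)) l.

Definition out_edge (j : 'I_2) : term_edge b := @Tagged _ j (fun j => 'I_(b j)) ord0.

Lemma ord2_cases (j : 'I_2) : j = ord0 \/ j = ord_max.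
Proof. by case: j => -[|[|//]] ?; [left | right]; apply: val_inj. Qed.

Lemma edge_inj2 j j' (l l' : 'I_(2 * t)) : edge j l = edge j' l' -> j = j' /\ l = l'.
Proof.
move=> e; split; first exact: (congr1 (@tag _ _) e).
by apply: val_inj; exact: (congr1 (fun e : src_edge a => val (tagged e)) e).
Qed.

Lemma mem_edge_imset j j' (l : 'I_(2 * t)) (S : {set 'I_(2 * t)}) :
  (edge j l \in edge j' @: S) = (j == j') && (l \in S).
Proof.
apply/imsetP/andP => [[l' l'S /edge_inj2 [-> ->]] | [/eqP -> lS]]; last by exists l.
by rewrite eqxx.
Qed.

Lemma card_edge_imset j (S : {set 'I_(2 * t)}) : #|edge j @: S| = #|S|.
Proof. by apply: card_imset => l l' /edge_inj2 []. Qed.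

Lemma node_inE (x : input A a) j (l : 'I_(2 * t)) : node_in x j l = x (edge j l).
Proof. by rewrite ffunE. Qed.

Definition low_half : {set 'I_(2 * t)} := [set l : 'I_(2 * t) | l < t].

Lemma card_low_half : #|low_half| = t.
Proof. by apply: card_ord_ltn; lia. Qed.

Lemma card_high_half : #|~: low_half| = t.
Proof. by apply/eqP; rewrite -(eqn_add2l t) -{1}card_low_half cardsC card_ord; lia. Qed.

Lemma patch_node_in0 (S : {set 'I_(2 * t)}) (x y : input A a) :
  node_in (patch (edge ord_max @: S) x y) ord0 = node_in x ord0.
Proof. by apply/ffunP => l; rewrite !node_inE ffunE mem_edge_imset. Qed.

Lemma patch_node_in1 (S : {set 'I_(2 * t)}) (x y : input A a) (l : 'I_(2 * t)) :
  node_in (patch (edge ord_max @: S) x y) ord_max l =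
  if l \in S then y (edge ord_max l) else x (edge ord_max l).
Proof. by rewrite node_inE ffunE mem_edge_imset eqxx. Qed.

Lemma fanout_A1_meet (F : netcode A a b) (c1 c2 : codeword A a i) :
  (forall r, F ord0 (node_in (c1 r) ord0) = F ord0 (node_in (c2 r) ord0)) ->
  ~~ [disjoint fanout_A1 t F c1 & fanout_A1 t F c2].
Proof.
move=> same0.
pose x1 := [ffun r => patch (edge ord_max @: ~: low_half) (c1 r) (c2 r)].
pose x2 := [ffun r => patch (edge ord_max @: low_half) (c2 r) (c1 r)].
have out_eq : [ffun r => net_out F (x1 r)] = [ffun r => net_out F (x2 r)].
  apply/ffunP => r; rewrite !ffunE; apply: net_out_congr => j.
  case: (ord2_cases j) => ->; first by rewrite !patch_node_in0.
  by congr (F _ _); apply/ffunP => l; rewrite !patch_node_in1 in_setC; case: (l \in _).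
apply/pred0Pn; exists [ffun r => net_out F (x1 r)]; apply/andP; split.
  apply: mem_fanout_A1 => [|r]; last by rewrite ffunE; apply: agree_outside_patch.
  by rewrite card_edge_imset card_high_half.
rewrite out_eq; apply: mem_fanout_A1 => [|r]; last first.
  by rewrite ffunE; apply: agree_outside_patch.
by rewrite card_edge_imset card_low_half.
Qed.

Lemma unambiguous_card_le s (F : netcode A a b) (C : {set codeword A a i}) :
  unambiguous t s F C -> #|C| <= #|A| ^ i.
Proof.
move=> /unambiguous_A1 /andP [_ /forall_inP disj].
pose out0 (c : codeword A a i) : {ffun 'I_i -> {ffun 'I_1 -> A}} :=
  [ffun r => F ord0 (node_in (c r) ord0)].
have out0_inj : {in C &, injective out0}.
  move=> c1 c2 C1 C2 e; apply: contraNeq (implyP (forall_inP (disj c1 C1) c2 C2)) _.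
  apply: fanout_A1_meet => r.
  by move/ffunP/(_ r): e; rewrite !ffunE.
rewrite -(card_in_imset out0_inj); apply: leq_trans (max_card _) _.
by rewrite !card_ffun !card_ord expn1.
Qed.

Section MajorityCode.
Variable a0 : A.

Definition maj_code : netcode A a b :=
  [ffun j => ([ffun u => [ffun _ => thr_min a0 t u]]
                : {ffun {ffun 'I_(a j) -> A} -> {ffun 'I_(b j) -> A}})].

Definition repetition (m : {ffun 'I_i -> A}) : codeword A a i :=
  [ffun r => [ffun _ => m r]].

Definition decode (o : output A b) : A :=
  rank_max (o (out_edge ord0)) (o (out_edge ord_max)).

Lemma net_out_maj x j : net_out maj_code x (out_edge j) = thr_min a0 t (node_in x j).
Proof. by rewrite !ffunE. Qed.

Definition errors (x : input A a) (m : A) (j : 'I_2) : {set 'I_(2 * t)} :=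
  [set l | x (edge j l) != m].

Lemma occ_node_in x m j : occ (node_in x j) m = 2 * t - #|errors x m j|.
Proof.
suff: occ (node_in x j) m + #|errors x m j| = 2 * t by lia.
rewrite -[X in _ = X](card_ord (2 * t)) -(cardsC (errors x m j)) addnC; congr (_ + _).
by apply: eq_card => l; rewrite !inE node_inE negbK.
Qed.

Lemma errors_card_le (W : {set src_edge a}) (x : input A a) m :
  agree_outside W [ffun _ => m] x ->
  #|errors x m ord0| + #|errors x m ord_max| <= #|W|.
Proof.
move=> /forallP agree.
have errW j : edge j @: errors x m j \subset W.
  apply/subsetP => e /imsetP [l]; rewrite inE => err ->; apply: contraR err => notW.
  by move/implyP/(_ notW)/eqP: (agree (edge j l)); rewrite ffunE => <-; apply: eqxx.
rewrite -(card_edge_imset ord0 (errors x m ord0)).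
rewrite -(card_edge_imset ord_max (errors x m ord_max)) -cardsUI.
have -> : edge ord0 @: errors x m ord0 :&: edge ord_max @: errors x m ord_max = set0.
  apply/setP => e; rewrite !inE; apply/andP => -[/imsetP [l _ ->]].
  by rewrite mem_edge_imset.
by rewrite cards0 addn0 subset_leq_card // subUset !errW.
Qed.

Lemma decode_maj (W : {set src_edge a}) (x : input A a) m :
  #|W| <= t -> agree_outside W [ffun _ => m] x -> decode (net_out maj_code x) = m.
Proof.
move=> cardW /errors_card_le err; rewrite /decode !net_out_maj; apply: rank_maxE.
have occ0 := occ_node_in x m ord0; have occ1 := occ_node_in x m ord_max.
case: (ltnP #|errors x m ord0| t) => err0; [left | right]; split.
- by apply: thr_min_major; [rewrite card_ord | rewrite occ0; lia].
- by apply: (proj2 (thr_minP a0 _)); rewrite occ1; lia.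
- by apply: thr_min_major; [rewrite card_ord | rewrite occ1; lia].
- by apply: (proj2 (thr_minP a0 _)); rewrite occ0; lia.
Qed.

Lemma decode_fanout m y :
  y \in fanout_A2 t maj_code (repetition m) -> [ffun r => decode (y r)] = m.
Proof.
move=> ym; apply/ffunP => r; have [W [x [cardW agree yx]]] := fanout_A2P r ym.
by rewrite ffunE yx (decode_maj (m := m r) cardW) //; rewrite ffunE in agree.
Qed.

Lemma repetition_inj : injective repetition.
Proof.
move=> m1 m2 /ffunP e; apply/ffunP => r; have t2_gt0 : 0 < 2 * t by rewrite muln_gt0.
by move/ffunP/(_ (edge ord0 (Ordinal t2_gt0))): (e r); rewrite !ffunE.
Qed.

Lemma maj_code_unambiguous s : unambiguous t s maj_code (repetition @: setT).
Proof.
apply: unambiguous_A2; apply/andP; split.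
  by apply/set0Pn; exists (repetition [ffun _ => a0]); apply: imset_f.
apply/forall_inP => _ /imsetP [m1 _ ->]; apply/forall_inP => _ /imsetP [m2 _ ->].
apply/implyP; apply: contraR => /pred0Pn [y /andP [/decode_fanout y1 /decode_fanout y2]].
by rewrite -y1 -y2.
Qed.

Lemma max_code_size_ge s : #|A| ^ i <= max_code_size A a b t i s.
Proof.
have <- : #|repetition @: setT| = #|A| ^ i.
  by rewrite (card_imset _ repetition_inj) cardsT card_ffun card_ord.
exact: leq_trans (leq_bigmax_cond _ (maj_code_unambiguous s)) (leq_bigmax maj_code).
Qed.

End MajorityCode.

End TwoNodeNetwork.

Section Logarithm.
Local Open Scope R_scope.

Lemma INR_expn (q k : nat) : INR (q ^ k)%N = INR q ^ k.
Proof. by elim: k => [|k IHk]; rewrite ?expn0 // expnS mult_INR IHk. Qed.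

Lemma log_expn_div (q k : nat) :
  (1 < q)%N -> (0 < k)%N -> ln (INR (q ^ k)%N) / ln (INR q) / INR k = 1.
Proof.
move=> /ltP q_gt1 /ltP k_gt0.
have ln_q : 0 < ln (INR q).
  by rewrite -ln_1; apply: ln_increasing; [lra | exact: lt_1_INR].
have k_pos : 0 < INR k by exact: lt_0_INR.
rewrite INR_expn ln_pow; last by apply: lt_0_INR; lia.
by field; split; apply: Rgt_not_eq.
Qed.

End Logarithm.

Theorem proposition4p7 (A : finType) (t : nat) (ht : (1 <= t)%N)
  (hA : (2 <= #|A|)%N) (i : nat) (hi : (1 <= i)%N) (s : scenario) :
  capacity A (Dt_a t) Dt_b t i s = R1.
Proof.
have /card_gt0P [a0 _] : 0 < #|A| by lia.
rewrite /capacity; have -> : max_code_size A (Dt_a t) Dt_b t i s = #|A| ^ i.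
  apply/eqP; rewrite eqn_leq (max_code_size_ge i ht a0) andbT.
  by apply/bigmax_leqP => F _; apply/bigmax_leqP => C; apply: unambiguous_card_le.
exact: log_expn_div.
Qed.
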